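(* Let $G\in\Phi$. Then for any two distinct vertices $u_1,u_2$ of $G$, $b(G/u_1u_2)\in\{1,3\}$.
   Context: Graphs are finite, undirected, possibly with loops and parallel edges. A graph is non-separable if it is connected, has no cut-vertex, and either has no loops or has exactly one vertex and one edge; a block is a maximal non-separable subgraph; $b(G)$ is the number of blocks of $G$ with at least one edge. $G/u_1u_2$ is obtained by identifying vertices $u_1,u_2$ (edges joining them become loops); $G/e$ is contraction of edge $e$. $\Phi$ is the set of non-separable graphs $G$ with $|V(G)|\ge 2$ such that: (a') $G-e$ is non-separable for every edge $e$; (b') $b(G/e)$ is even for every edge $e$; (c') whenever $G_1,G_2$ are subgraphs of $G$ with $|E(G_1)|,|E(G_2)|\ge 2$, $V(G_1)\cap V(G_2)=\{u_1,u_2\}$ (distinct), $V(G_1)\cup V(G_2)=V(G)$, $E(G_1)\cap E(G_2)=\emptyset$, $E(G_1)\cup E(G_2)=E(G)$, the integers $b(G_1/u_1u_2)$, $b(G_1)-1$, $b(G_2)$ all have the same parity. *)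

From mathcomp Require Import all_boot.
Set Implicit Arguments. Unset Strict Implicit. Unset Printing Implicit Defensive.

(* A multigraph whose vertices and edges are drawn from ambient finite types
   V and E: a vertex set, an edge set, and an endpoint map (the pair of ends
   is read as unordered; a loop has equal ends). *)
Record mgraph (V E : finType) := MGraph {
  gV : {set V};
  gE : {set E};
  gend : E -> V * V }.

Section Graphs.
Variables (V E : finType).
Implicit Types (G : mgraph V E) (v x y : V) (e : E).

Definition wfb G : bool :=
  [forall e in gE G, ((gend G e).1 \in gV G) && ((gend G e).2 \in gV G)].

Definition is_loop G e : bool := (gend G e).1 == (gend G e).2.

Definition adjb G : rel V := fun x y =>
  [exists e in gE G, (gend G e == (x, y)) || (gend G e == (y, x))].

Definition connb G : rel V := connect (adjb G).

Definition connected G : bool :=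
  (gV G != set0) && [forall x in gV G, forall y in gV G, connb G x y].

Definition delv G v : mgraph V E :=
  MGraph (gV G :\ v)
         [set e in gE G | ((gend G e).1 != v) && ((gend G e).2 != v)]
         (gend G).

Definition dele G e : mgraph V E := MGraph (gV G) (gE G :\ e) (gend G).

Definition cutv G v : bool :=
  (v \in gV G) &&
  [exists x in gV G :\ v, exists y in gV G :\ v,
     connb G x y && ~~ connb (delv G v) x y].

Definition loopless G : bool := [forall e in gE G, ~~ is_loop G e].

Definition nonsep G : bool :=
  [&& connected G, [forall v, ~~ cutv G v] &
      (loopless G || ((#|gV G| == 1) && (#|gE G| == 1)))].

(* G / u1u2 : identify u1 and u2 (u2 is merged into u1); edges joining them
   become loops *)
Definition idv G (u1 u2 : V) : mgraph V E :=
  let f := fun x => if x == u2 then u1 else x in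
  MGraph (gV G :\ u2) (gE G) (fun e => (f (gend G e).1, f (gend G e).2)).

(* G / e : contraction of edge e (contracting a loop = deleting it) *)
Definition contr G e : mgraph V E :=
  if is_loop G e then dele G e
  else idv (dele G e) (gend G e).1 (gend G e).2.

Definition subg G (p : {set V} * {set E}) : mgraph V E :=
  MGraph p.1 p.2 (gend G).

Definition is_subg G (p : {set V} * {set E}) : bool :=
  [&& p.1 \subset gV G, p.2 \subset gE G & wfb (subg G p)].

Definition is_block G (p : {set V} * {set E}) : bool :=
  [&& is_subg G p, nonsep (subg G p) &
   [forall q : {set V} * {set E},
      [&& is_subg G q, nonsep (subg G q), p.1 \subset q.1 & p.2 \subset q.2]
      ==> (q == p)]].

Definition nblocks G : nat :=
  #|[set p : {set V} * {set E} | is_block G p && (p.2 != set0)]|.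

Definition inPhi G : bool :=
  [&& nonsep G, 2 <= #|gV G|,
   [forall e in gE G, nonsep (dele G e)],
   [forall e in gE G, ~~ odd (nblocks (contr G e))] &
   [forall p1 : {set V} * {set E}, forall p2 : {set V} * {set E},
    forall u1 : V, forall u2 : V,
     [&& is_subg G p1, is_subg G p2, 2 <= #|p1.2|, 2 <= #|p2.2|,
         u1 != u2, p1.1 :&: p2.1 == [set u1; u2],
         p1.1 :|: p2.1 == gV G, p1.2 :&: p2.2 == set0 &
         p1.2 :|: p2.2 == gE G] ==>
     (odd (nblocks (idv (subg G p1) u1 u2)) == ~~ odd (nblocks (subg G p1)))
     && (~~ odd (nblocks (subg G p1)) == odd (nblocks (subg G p2)))]].

End Graphs.

From mathcomp Require Import all_boot fingraph.
Set Implicit Arguments. Unset Strict Implicit. Unset Printing Implicit Defensive.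

(* Let W = {u1, u2}. In G/u1u2 the bridges of W, with u2 merged into u1, are
   non-separable and pairwise meet only in the merged vertex, so they are the
   blocks and b(G/u1u2) is the number k > 0 of bridges. A bridge that is a single
   edge e joins u1 and u2 by (a'), so G/e = (G - e)/u1u2 has k - 1 blocks and (b')
   makes k odd. For even k every bridge thus has two or more edges, and (c') on a
   split of the bridges into two groups rules out k = 2 (split them in both
   orders) and k >= 4 (two bridges against the rest: both unions are
   non-separable, while b(G1/u1u2) = 2). Hence k is 1 or 3. *)

Section Connectivity.
Variables (V E : finType).
Implicit Types (G K : mgraph V E) (x y z v w : V) (f g : E).

Lemma connect_stable (e : rel V) (P : pred V) x y :
  (forall u v, P u -> e u v -> P v) -> P x -> connect e x y -> P y.
Proof.
move=> stableP Px /connectP [p pth ->]; elim: p x Px pth => //= z p IH x Px /andP[exz pth].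
exact: IH (stableP _ _ Px exz) pth.
Qed.

Lemma connect_first_step (e : rel V) x y : connect e x y -> x != y -> exists z, e x z.
Proof.
move=> /connectP [[|z p] /= pth ->]; first by rewrite eqxx.
by case/andP: pth => exz _ _; exists z.
Qed.

Lemma connect_first_hit (e : rel V) (A : {set V}) x y : connect e x y -> y \in A ->
  exists2 z, z \in A & connect [rel u v | (u \notin A) && e u v] x z.
Proof.
move=> exy yA; apply/exists_inP; apply: contraTT yA => /exists_inPn noA.
suff xy : connect [rel u v | (u \notin A) && e u v] x y by apply: contraL xy; apply: noA.
apply: (connect_stable (P := connect _ x)) exy; last exact: connect0.
move=> u v /= xu uv; apply: (connect_trans xu) (connect1 _); rewrite /= uv andbT.
by apply: contraTN xu; apply: noA.
Qed.

Lemma eq_card_imset_ker (T1 T2 : finType) (h1 : E -> T1) (h2 : E -> T2) (S : {set E}) :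
  {in S &, forall i j, (h1 i == h1 j) = (h2 i == h2 j)} -> #|h1 @: S| = #|h2 @: S|.
Proof.
move=> ker12; set P := [set (h1 i, h2 i) | i in S].
have inj1 : {in P &, injective fst}.
  move=> _ _ /imsetP[i iS ->] /imsetP[j jS ->] /= eq1.
  by have := ker12 i j iS jS; rewrite eq1 eqxx => /esym/eqP ->.
have inj2 : {in P &, injective snd}.
  move=> _ _ /imsetP[i iS ->] /imsetP[j jS ->] /= eq2.
  by have := ker12 i j iS jS; rewrite eq2 eqxx => /eqP ->.
have -> : h1 @: S = fst @: P by rewrite -imset_comp.
have -> : h2 @: S = snd @: P by rewrite -imset_comp.
by rewrite (card_in_imset inj1) (card_in_imset inj2).
Qed.

Definition incident G f x := ((gend G f).1 == x) || ((gend G f).2 == x).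

Lemma adjbP K x y :
  reflect (exists2 f, f \in gE K & (gend K f == (x, y)) || (gend K f == (y, x))) (adjb K x y).
Proof. by apply: (iffP existsP) => [[f /andP[fE H]]|[f fE H]]; exists f; rewrite ?fE. Qed.

Lemma adjb_sym K : symmetric (adjb K).
Proof. by move=> x y; apply/adjbP/adjbP => -[f fE H]; exists f; rewrite // orbC. Qed.

Lemma adjb_gend K f : f \in gE K -> adjb K (gend K f).1 (gend K f).2.
Proof. by move=> fE; apply/adjbP; exists f; rewrite // -surjective_pairing eqxx. Qed.

Lemma connb_sym K x y : connb K x y = connb K y x.
Proof. by rewrite /connb sym_connect_sym //; apply: adjb_sym. Qed.

Lemma connb_trans K y x z : connb K x y -> connb K y z -> connb K x z.
Proof. exact: connect_trans. Qed.

Lemma connb_sub K1 K2 x y :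
  (forall f, f \in gE K1 -> f \in gE K2) -> (forall f, gend K1 f = gend K2 f) ->
  connb K1 x y -> connb K2 x y.
Proof.
move=> sE sgend; apply: connect_sub => u v /adjbP [f fE H]; apply: connect1; apply/adjbP.
by exists f; [apply: sE | rewrite -sgend].
Qed.

Lemma connb_homo K1 K2 (h : V -> V) x y :
  (forall u v, adjb K1 u v -> connb K2 (h u) (h v)) ->
  connb K1 x y -> connb K2 (h x) (h y).
Proof.
move=> hadj; apply: (@connect_stable _ (fun z => connb K2 (h x) (h z))); last exact: connect0.
by move=> u v /= hxu /hadj; apply: connb_trans.
Qed.

Lemma delvP K f z :
  (f \in gE (delv K z)) = [&& f \in gE K, (gend K f).1 != z & (gend K f).2 != z].
Proof. by rewrite inE. Qed.

Lemma connb_delv K z x y : connb (delv K z) x y -> connb K x y.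
Proof. by apply: connb_sub => // f; rewrite delvP => /andP[]. Qed.

Lemma subgP K (p : {set V} * {set E}) : is_subg K p ->
  [/\ p.1 \subset gV K, p.2 \subset gE K &
      forall f, f \in p.2 -> ((gend K f).1 \in p.1) && ((gend K f).2 \in p.1)].
Proof. by case/and3P => sV sE /forallP wf; split => // f fp; have := wf f; rewrite fp. Qed.

Lemma nonsep_connb K x y : nonsep K -> x \in gV K -> y \in gV K -> connb K x y.
Proof.
case/and3P => /andP [_ /forallP connK] _ _ xK yK.
by have := connK x; rewrite xK => /forallP /(_ y); rewrite yK.
Qed.

(* Also for [w] outside [gV K], where [wfb K] makes [delv K w] keep every edge. *)
Lemma nonsep_connb_delv K w x y : wfb K -> nonsep K ->
  x \in gV K -> y \in gV K -> x != w -> y != w -> connb (delv K w) x y.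
Proof.
move=> wfK nsK xK yK xw yw; have [wK|wK] := boolP (w \in gV K).
  case/and3P: (nsK) => _ /forallP /(_ w); rewrite /cutv wK negb_exists => /forallP /(_ x).
  rewrite !inE xw xK negb_exists => /forallP /(_ y).
  by rewrite !inE yw yK (nonsep_connb nsK) //= negbK.
apply: connb_sub (nonsep_connb nsK xK yK) => // f fK; rewrite delvP fK /=.
have := forallP wfK f; rewrite fK => /andP [f1 f2].
by apply/andP; split; apply: contraNneq wK => <-.
Qed.

Lemma connected_hub K t : t \in gV K -> (forall y, y \in gV K -> connb K y t) -> connected K.
Proof.
move=> tK to_t; apply/andP; split; first by apply/set0Pn; exists t.
apply/forallP => x; apply/implyP => xK; apply/forallP => y; apply/implyP => yK.
by apply: connb_trans (to_t _ xK) _; rewrite connb_sym; apply: to_t.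
Qed.

Lemma not_cutv_hub K v t :
  (forall y, y \in gV K :\ v -> connb (delv K v) y t) -> ~~ cutv K v.
Proof.
move=> to_t; apply/negP => /andP [_ /exists_inP [x xK /exists_inP [y yK /andP [_ /negP]]]].
by apply; apply: connb_trans (to_t _ xK) _; rewrite connb_sym; apply: to_t.
Qed.

Lemma nblocks_nonsep K : wfb K -> nonsep K -> gE K != set0 -> nblocks K = 1.
Proof.
move=> wfK nsK EK; have Ksubg : is_subg K (gV K, gE K) by rewrite /is_subg /= !subxx.
have Kns : nonsep (subg K (gV K, gE K)) by [].
suff blocksK : [set p | is_block K p && (p.2 != set0)] = [set (gV K, gE K)].
  by rewrite /nblocks blocksK cards1.
apply/setP => p; rewrite !inE; apply/idP/idP.
- case/andP => /and3P [/and3P [s1 s2 _] _ /forallP maxp] _.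
  by have := maxp (gV K, gE K); rewrite Ksubg Kns s1 s2 /= => /eqP ->.
- move/eqP => ->; rewrite EK andbT; apply/and3P; split => //; apply/forallP => q.
  apply/implyP => /and4P [/and3P [t1 t2 _] _ u1 u2].
  by apply/eqP; rewrite [q]surjective_pairing; congr pair; apply/eqP; rewrite eqEsubset ?t1 ?t2.
Qed.

End Connectivity.

Section BlocksThroughVertex.
Variables (V E : finType) (K : mgraph V E) (w : V) (blk : E -> {set V} * {set E}).
Hypothesis blk_subg : forall e, e \in gE K -> is_subg K (blk e).
Hypothesis blk_nonsep : forall e, e \in gE K -> nonsep (subg K (blk e)).
Hypothesis blk_edge : forall e, e \in gE K -> e \in (blk e).2.
Hypothesis blk_hub : forall e, e \in gE K -> w \in (blk e).1.
Hypothesis blk_closed : forall e f x, e \in gE K -> f \in gE K ->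
  incident K f x -> x \in (blk e).1 -> x != w -> f \in (blk e).2.

Lemma blk_gend e f : e \in gE K -> f \in (blk e).2 ->
  ((gend K f).1 \in (blk e).1) && ((gend K f).2 \in (blk e).1).
Proof. by move=> eK; case/subgP: (blk_subg eK) => _ _; apply. Qed.

Lemma connb_blk_stable e (K' : mgraph V E) s z : e \in gE K ->
  (forall f, f \in gE K' -> f \in gE K) -> (forall f, gend K' f = gend K f) ->
  (forall f, f \in gE K' -> ((gend K f).1 != w) && ((gend K f).2 != w)) ->
  s \in (blk e).1 :\ w -> connb K' s z -> z \in (blk e).1 :\ w.
Proof.
move=> eK sE sgend avoid_w.
apply: (connect_stable (P := fun x => x \in (blk e).1 :\ w)) => u v /=.
rewrite !inE => /andP [uw ublk].
case/adjbP => f fE; rewrite sgend => uv; have fK := sE _ fE.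
have fblk : f \in (blk e).2.
  apply: (blk_closed (x := u)) => //.
  by rewrite /incident; case/orP: uv => /eqP ->; rewrite eqxx ?orbT.
move: (avoid_w _ fE) (blk_gend eK fblk).
by case/orP: uv => /eqP -> /= /andP [? ?] /andP [? ?]; apply/andP.
Qed.

Lemma loopless_nonsep_sub_blk q e : is_subg K q -> nonsep (subg K q) ->
  loopless (subg K q) -> e \in q.2 -> q.1 \subset (blk e).1 /\ q.2 \subset (blk e).2.
Proof.
move=> qK nsq /forallP nlq eq; case/subgP: (qK) => _ qE qgend.
have eK : e \in gE K by apply: (subsetP qE).
have nl f : f \in q.2 -> (gend K f).1 != (gend K f).2 by move=> fq; have := nlq f; rewrite fq.
have [s sblk sq] : exists2 s, s \in (blk e).1 :\ w & s \in q.1.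
  have /andP [e1 e2] := blk_gend eK (blk_edge eK); have /andP [e1q e2q] := qgend e eq.
  case: (eqVneq (gend K e).1 w) => [e1w|e1w]; last by exists (gend K e).1; rewrite ?inE ?e1w.
  by exists (gend K e).2; rewrite ?inE ?e2 // -e1w eq_sym nl.
have sub1 : q.1 \subset (blk e).1.
  apply/subsetP => z zq; case: (eqVneq z w) => [-> |zw]; first exact: blk_hub.
  have wfq : wfb (subg K q) by case/and3P: qK.
  have /setD1P [sw _] := sblk.
  suff : z \in (blk e).1 :\ w by case/setD1P.
  apply: (connb_blk_stable (K' := delv (subg K q) w) eK _ _ _ sblk
    (nonsep_connb_delv wfq nsq sq zq sw zw)) => f.
  - by rewrite delvP => /andP [/(subsetP qE)].
  - by [].
  - by rewrite delvP => /and3P [_ -> ->].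
split => //; apply/subsetP => f fq; have fK := subsetP qE f fq.
have /andP [f1 f2] := qgend f fq.
case: (eqVneq (gend K f).1 w) => [f1w|f1w].
- apply: (blk_closed (x := (gend K f).2)) => //; rewrite ?/incident ?eqxx ?orbT //.
  + exact: (subsetP sub1).
  + by rewrite -f1w eq_sym nl.
- by apply: (blk_closed (x := (gend K f).1)) => //; rewrite ?/incident ?eqxx // (subsetP sub1).
Qed.

Lemma nonsep_sub_blk q e : is_subg K q -> nonsep (subg K q) -> e \in q.2 ->
  q.1 \subset (blk e).1 /\ q.2 \subset (blk e).2.
Proof.
move=> qK nsq eq; case/and3P: (nsq) => _ _ /orP [nlq|/andP [/cards1P [x qx] /cards1P [g qg]]].
  exact: loopless_nonsep_sub_blk.
have eK : e \in gE K by case/subgP: (qK) => _ /subsetP /(_ e eq).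
move: qx qg eq => /= qx qg; rewrite qg inE => /eqP ?; subst g.
have /andP [e1 _] := blk_gend eK (blk_edge eK).
case/subgP: qK => _ _ /(_ e); rewrite qg inE eqxx qx inE => /(_ isT) /andP [/eqP ex _].
by rewrite !sub1set -ex e1 blk_edge.
Qed.

Lemma nonempty_blocks_eq : [set p | is_block K p && (p.2 != set0)] = blk @: gE K.
Proof.
apply/setP => p; rewrite inE; apply/andP/imsetP.
- case => /and3P [pK nsp /forallP maxp] /set0Pn [e ep].
  have eK : e \in gE K by case/subgP: (pK) => _ /subsetP /(_ e ep).
  exists e => //; have [s1 s2] := nonsep_sub_blk pK nsp ep.
  have := maxp (blk e); rewrite blk_subg // blk_nonsep // s1 s2 /=.
  by move/eqP.
- case=> e eK ->; split; last by apply/set0Pn; exists e; apply: blk_edge.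
  apply/and3P; split; [exact: blk_subg | exact: blk_nonsep |].
  apply/forallP => q; apply/implyP => /and4P [qK nsq s1 s2].
  have [t1 t2] := nonsep_sub_blk qK nsq (subsetP s2 _ (blk_edge eK)).
  apply/eqP; rewrite [q]surjective_pairing [blk e]surjective_pairing.
  by congr pair; apply/eqP; rewrite eqEsubset ?s1 ?s2 ?t1 ?t2.
Qed.

Lemma nblocks_blk : nblocks K = #|blk @: gE K|.
Proof. by rewrite /nblocks nonempty_blocks_eq. Qed.

End BlocksThroughVertex.

(* The bridges of [W] are the components [C] of [G - W], each together with the
   edges incident to [C], and the edges with both ends in [W], each on its own.
   An edge [e] names its bridge through its end [outer_end e] outside [W]; when
   there is none, [bridge_comp e] is empty and [bridge e] is [[set e]]. *)
Section BridgeDefs.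
Variables (V E : finType) (G : mgraph V E) (W : {set V}).

Definition adj_avoid : rel V := fun x y => [&& adjb G x y, x \notin W & y \notin W].

Definition outer_end e := if (gend G e).1 \in W then (gend G e).2 else (gend G e).1.

Definition bridge_comp e :=
  [set z in gV G | (z \notin W) && connect adj_avoid (outer_end e) z].

Definition bridge e := [set f in gE G |
  [|| f == e, (gend G f).1 \in bridge_comp e | (gend G f).2 \in bridge_comp e]].

Definition bridge_graph e := MGraph (gV G) (bridge e) (gend G).

Definition bridge_part (S : {set E}) := (W :|: \bigcup_(f in S) bridge_comp f, S).

Definition bridge_edges (Q : {set {set E}}) := [set f in gE G | bridge f \in Q].

End BridgeDefs.

Definition merge (V : finType) (a b x : V) := if x == b then a else x.

Definition merged_bridge (V E : finType) (G : mgraph V E) (a b : V) e :=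
  MGraph (a |: bridge_comp G [set a; b] e) (bridge G [set a; b] e)
         (fun f => (merge a b (gend G f).1, merge a b (gend G f).2)).

Section Bridges.
Variables (V E : finType) (G : mgraph V E) (a b : V).
Hypotheses (wfG : wfb G) (nsG : nonsep G) (neq_ab : a != b).
Hypotheses (aG : a \in gV G) (bG : b \in gV G).
Implicit Types (x y z u v : V) (e f g : E).
Local Notation W := [set a; b].
Local Notation C := (bridge_comp G [set a; b]).
Local Notation F := (bridge G [set a; b]).
Local Notation bridges := (F @: gE G).

Lemma gend_in f : f \in gE G -> ((gend G f).1 \in gV G) && ((gend G f).2 \in gV G).
Proof. by move=> fG; have := forallP wfG f; rewrite fG. Qed.

Lemma gend_neq f : f \in gE G -> (gend G f).1 != (gend G f).2.
Proof.
move=> fG; case/and3P: nsG => _ _ /orP [/forallP nlG|/andP [/eqP VG1 _]].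
  by have := nlG f; rewrite fG.
have : #|W| <= #|gV G| by apply: subset_leq_card; rewrite subUset !sub1set aG bG.
by rewrite cards2 neq_ab VG1.
Qed.

Lemma adjb_in u v : adjb G u v -> (u \in gV G) && (v \in gV G).
Proof.
case/adjbP => f fG uv; have := gend_in fG.
by case/orP: uv => /eqP -> /= /andP [? ?]; apply/andP.
Qed.

Lemma adj_avoid_sym : symmetric (adj_avoid G W).
Proof. by move=> x y; apply/and3P/and3P => -[h1 h2 h3]; split; rewrite // adjb_sym. Qed.

Lemma in_bridge_comp x e :
  (x \in C e) = [&& x \in gV G, x \notin W & connect (adj_avoid G W) (outer_end G W e) x].
Proof. by rewrite inE. Qed.

Lemma in_bridge f e :
  (f \in F e) = (f \in gE G) && [|| f == e, (gend G f).1 \in C e | (gend G f).2 \in C e].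
Proof. by rewrite inE. Qed.

Lemma bridge_comp_notW x e : x \in C e -> x \notin W.
Proof. by rewrite in_bridge_comp => /and3P []. Qed.

Lemma bridge_comp_in x e : x \in C e -> x \in gV G.
Proof. by rewrite in_bridge_comp => /and3P []. Qed.

Lemma bridge_comp_neq x e : x \in C e -> (x != a) && (x != b).
Proof. by move/bridge_comp_notW; rewrite !inE negb_or. Qed.

Lemma bridge_comp_adj u v e : u \in C e -> adjb G u v -> v \notin W -> v \in C e.
Proof.
rewrite !in_bridge_comp => /and3P [uG uW cu] uv vW; have /andP [_ ->] := adjb_in uv.
by rewrite vW; apply: connect_trans cu (connect1 _); rewrite /adj_avoid uv uW vW.
Qed.

Lemma incident_bridge_comp f x : f \in gE G -> incident G f x -> x \notin W -> x \in C f.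
Proof.
move=> fG xf xW; have /andP [f1 f2] := gend_in fG.
have xG : x \in gV G by case/orP: xf => /eqP <-.
rewrite in_bridge_comp xG xW /= /outer_end; case: ifP => f1W.
  by case/orP: xf => /eqP xf; subst x; [rewrite f1W in xW | apply: connect0].
case/orP: xf => /eqP xf; subst x; first exact: connect0.
by apply: connect1; rewrite /adj_avoid f1W xW adjb_gend.
Qed.

Lemma bridge_comp0_gend e : e \in gE G -> C e = set0 ->
  ((gend G e).1 \in W) && ((gend G e).2 \in W).
Proof.
move=> eG Ce0; apply/andP; split; apply: contraT => eW;
  by have := incident_bridge_comp eG _ eW; rewrite Ce0 in_set0 /incident eqxx ?orbT => /(_ isT).
Qed.

Lemma bridge_sub f e : f \in F e -> f \in gE G.
Proof. by rewrite in_bridge => /andP []. Qed.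

Lemma bridge_self e : e \in gE G -> e \in F e.
Proof. by move=> eG; rewrite in_bridge eG eqxx. Qed.

Lemma bridge_incident e f x : e \in gE G -> f \in F e -> incident G f x ->
  (x \in W) || (x \in C e).
Proof.
move=> eG; rewrite in_bridge => /andP [fG fe] xf; have [//|xW /=] := boolP (x \in W).
case/or3P: fe => [/eqP fe | fC | fC]; first by subst f; apply: incident_bridge_comp.
- by case/orP: xf => /eqP xf; subst x; rewrite // (bridge_comp_adj fC (adjb_gend fG)).
- case/orP: xf => /eqP xf; subst x; rewrite // (bridge_comp_adj fC) //.
  by rewrite adjb_sym adjb_gend.
Qed.

Lemma outer_end_incident e : incident G e (outer_end G W e).
Proof. by rewrite /outer_end /incident; case: ifP; rewrite eqxx ?orbT. Qed.

Lemma outer_end_comp e : e \in gE G -> C e != set0 -> outer_end G W e \in C e.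
Proof.
move=> eG /set0Pn [z]; rewrite in_bridge_comp => /and3P [zG zW ez].
have [oW|oW] := boolP (outer_end G W e \in W); last first.
  exact: incident_bridge_comp (outer_end_incident e) oW.
case/connectP: ez => [[|u p] /= pth zl]; first by rewrite zl oW in zW.
by case/andP: pth => /and3P [_ /negP].
Qed.

Lemma bridge_comp_neq0E e f : e \in gE G -> C e != set0 ->
  (f \in F e) = (f \in gE G) && (((gend G f).1 \in C e) || ((gend G f).2 \in C e)).
Proof.
move=> eG Ce; rewrite in_bridge; case: (f \in gE G) => //=.
case: eqP => //= ->; have := outer_end_comp eG Ce; have := outer_end_incident e.
by case/orP => /eqP -> ->; rewrite ?orbT.
Qed.

Lemma bridge_comp_eq x e f : x \in C e -> x \in C f -> C e = C f.
Proof.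
rewrite !in_bridge_comp => /and3P [_ _ ex] /and3P [_ _ fx].
have sym_avoid := sym_connect_sym adj_avoid_sym.
have ef : connect (adj_avoid G W) (outer_end G W e) (outer_end G W f).
  by apply: connect_trans ex _; rewrite sym_avoid.
apply/setP => z; rewrite !in_bridge_comp; case: (z \in gV G); case: (z \in W) => //=.
apply/idP/idP; last exact: connect_trans ef.
by apply: connect_trans; rewrite sym_avoid.
Qed.

Lemma bridge_eq x e f : e \in gE G -> f \in gE G -> x \in C e -> x \in C f -> F e = F f.
Proof.
move=> eG fG xe xf; have Cef := bridge_comp_eq xe xf.
have Ce : C e != set0 by apply/set0Pn; exists x.
have Cf : C f != set0 by apply/set0Pn; exists x.
by apply/setP => g; rewrite bridge_comp_neq0E // bridge_comp_neq0E // Cef.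
Qed.

Lemma bridge_mem_eq e f : e \in gE G -> f \in F e -> F f = F e /\ C f = C e.
Proof.
move=> eG; rewrite in_bridge => /andP [fG /or3P [/eqP -> // | fC | fC]].
- have fCf : (gend G f).1 \in C f.
    by apply: incident_bridge_comp fG _ (bridge_comp_notW fC); rewrite /incident eqxx.
  by split; [apply: bridge_eq fCf fC | apply: bridge_comp_eq fCf fC].
- have fCf : (gend G f).2 \in C f.
    by apply: incident_bridge_comp fG _ (bridge_comp_notW fC); rewrite /incident eqxx orbT.
  by split; [apply: bridge_eq fCf fC | apply: bridge_comp_eq fCf fC].
Qed.

Lemma bridge_comp_inj e f : e \in gE G -> f \in gE G -> F e = F f -> C e = C f.
Proof. by move=> eG fG Fef; have := bridge_self eG; rewrite Fef => /(bridge_mem_eq fG) []. Qed.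

Lemma bridge_path_stable e x y z : e \in gE G -> y \in C e -> y != x ->
  connect [rel u v | (u \notin W) && adjb (delv G x) u v] y z ->
  (z != x) && connb (delv (bridge_graph G W e) x) y z.
Proof.
move=> eG yC yx yz.
pose P v := [&& (v \in W) || (v \in C e), v != x & connb (delv (bridge_graph G W e) x) y v].
suff /and3P [_ -> ->] : P z by [].
apply: (connect_stable (P := P)) yz; last by rewrite /P yC orbT yx; apply: connect0.
move=> u v /and3P [uWC ux yu] /andP [uW /adjbP [f]].
rewrite delvP => /and3P [fG f1 f2] /= uv.
have uC : u \in C e by rewrite (negPf uW) in uWC.
have fF : f \in F e by rewrite in_bridge fG; case/orP: uv => /eqP ->; rewrite uC ?orbT.
have vWC : (v \in W) || (v \in C e).
  apply: bridge_incident eG fF _.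
  by rewrite /incident; case/orP: uv => /eqP -> /=; rewrite eqxx ?orbT.
have vx : v != x by case/orP: uv => /eqP uv; rewrite uv /= in f1 f2.
rewrite /P vWC vx; apply: connect_trans yu (connect1 _); apply/adjbP; exists f => //.
by rewrite delvP fF f1 f2.
Qed.

Lemma bridge_reaches_pole e x y : e \in gE G -> x \in gV G -> y \in C e -> y != x ->
  exists2 z, z \in W & (z != x) && connb (delv (bridge_graph G W e) x) y z.
Proof.
move=> eG xG yC yx; pose t := if x == a then b else a.
have tW : t \in W by rewrite /t; case: ifP; rewrite !inE eqxx ?orbT.
have tx : t != x by rewrite /t; case: (eqVneq x a) => [->|]; rewrite // eq_sym.
have tG : t \in gV G by rewrite /t; case: ifP.
have yt := nonsep_connb_delv wfG nsG (bridge_comp_in yC) tG yx tx.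
have [z zW yz] := connect_first_hit yt tW.
by exists z => //; apply: bridge_path_stable yz.
Qed.

Lemma merge_pole z : z \in W -> merge a b z = a.
Proof. by rewrite !inE /merge => /orP [/eqP ->|/eqP ->]; rewrite ?eqxx // (negPf neq_ab). Qed.

Lemma merge_id z : z \notin W -> merge a b z = z.
Proof. by rewrite !inE negb_or /merge => /andP [_ /negPf ->]. Qed.

Lemma merge_neq x z : x != a -> z != x -> merge a b z != x.
Proof. by rewrite /merge; case: ifP => // _ xa _; rewrite eq_sym. Qed.

Lemma merge_eq_id x y : merge a b y = x -> x != a -> y = x.
Proof. by rewrite /merge; case: ifP => // _ <-; rewrite eqxx. Qed.

Lemma merged_bridge_reaches e x y : e \in gE G -> x \in gV G -> x != a ->
  y \in C e -> y != x -> connb (delv (merged_bridge G a b e) x) y a.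
Proof.
move=> eG xG xa yC yx; have [z zW /andP [zx yz]] := bridge_reaches_pole eG xG yC yx.
have := connb_homo (K2 := delv (merged_bridge G a b e) x) (h := merge a b) _ yz.
rewrite merge_id ?(bridge_comp_notW yC) // merge_pole //; apply.
move=> u v /adjbP [f]; rewrite delvP /= => /and3P [fF f1 f2] uv.
apply: connect1; apply/adjbP; exists f; first by rewrite delvP fF /= !merge_neq.
by case/orP: uv => /eqP uv; rewrite /= uv eqxx ?orbT.
Qed.

Lemma merged_bridge_comp_connb e z : e \in gE G -> z \in C e ->
  connb (delv (merged_bridge G a b e) a) (outer_end G W e) z.
Proof.
move=> eG zC; have Ce : C e != set0 by apply/set0Pn; exists z.
have := zC; rewrite in_bridge_comp => /and3P [_ _ ez].
pose P v := (v \in C e) && connb (delv (merged_bridge G a b e) a) (outer_end G W e) v.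
suff /andP [] : P z by [].
apply: (connect_stable (P := P)) ez; last by rewrite /P outer_end_comp //; apply: connect0.
move=> u v /andP [uC eu] /and3P [uv uW vW]; have vC := bridge_comp_adj uC uv vW.
rewrite /P vC; apply: (connect_trans eu) (connect1 _).
have /andP [ua _] := bridge_comp_neq uC; have /andP [va _] := bridge_comp_neq vC.
case/adjbP: uv => f fG uv; apply/adjbP; exists f.
  rewrite delvP in_bridge fG /=.
  by case/orP: uv => /eqP -> /=; rewrite !merge_id // ua va uC ?orbT.
by case/orP: uv => /eqP uv; rewrite /= uv /= !merge_id // eqxx ?orbT.
Qed.

Lemma merged_bridge_loopless e : e \in gE G -> C e != set0 ->
  loopless (merged_bridge G a b e).
Proof.
move=> eG Ce; apply/forallP => f; apply/implyP => /= fF; rewrite /is_loop /=.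
have nlf := gend_neq (bridge_sub fF).
move: fF; rewrite bridge_comp_neq0E // => /andP [_ /orP [fC|fC]];
  have /andP [fa _] := bridge_comp_neq fC; rewrite (merge_id (bridge_comp_notW fC)).
- by have [fW|fW] := boolP ((gend G f).2 \in W); rewrite ?(merge_pole fW) ?(merge_id fW).
- have [fW|fW] := boolP ((gend G f).1 \in W); rewrite ?(merge_pole fW) ?(merge_id fW) //.
  by rewrite eq_sym.
Qed.

Lemma nonsep_merged_bridge_comp0 e : e \in gE G -> C e = set0 ->
  nonsep (merged_bridge G a b e).
Proof.
move=> eG Ce0; have Va : gV (merged_bridge G a b e) = [set a] by rewrite /= Ce0 setU0.
have Fe : F e = [set e].
  apply/setP => f; rewrite in_bridge Ce0 !in_set0 !orbF inE.
  by case: eqP => [->|]; rewrite ?eG ?andbF.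
apply/and3P; split; last by rewrite Va [gE _]Fe !cards1 eqxx orbT.
- apply: (connected_hub (t := a)); rewrite Va ?inE // => y; rewrite inE => /eqP ->.
  exact: connect0.
- apply/forallP => v; apply: (not_cutv_hub (t := a)) => y.
  by rewrite Va !inE => /andP [_ /eqP ->]; apply: connect0.
Qed.

Lemma nonsep_merged_bridge e : e \in gE G -> nonsep (merged_bridge G a b e).
Proof.
move=> eG; have [Ce0|Ce] := eqVneq (C e) set0; first exact: nonsep_merged_bridge_comp0.
have toA y : y \in a |: C e -> y != b -> connb (delv (merged_bridge G a b e) b) y a.
  case/setU1P => [-> _|yC yb]; first exact: connect0.
  by apply: merged_bridge_reaches; rewrite // eq_sym.
apply/and3P; split.
- apply: (connected_hub (t := a)); first exact: setU11.
  move=> y yV; apply: connb_delv (toA y yV _).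
  by case/setU1P: yV => [-> //|/bridge_comp_neq /andP []].
- apply/forallP => v; have [vV|vV] := boolP (v \in gV (merged_bridge G a b e)); last first.
    by rewrite /cutv (negPf vV).
  case/setU1P: vV => [->|vC].
    apply: (not_cutv_hub (t := outer_end G W e)) => y.
    rewrite in_setD1 in_setU1 => /andP [ya]; rewrite (negPf ya) /= => yC.
    by rewrite connb_sym; apply: merged_bridge_comp_connb.
  have /andP [va _] := bridge_comp_neq vC.
  apply: (not_cutv_hub (t := a)) => y; rewrite in_setD1 in_setU1.
  case/andP => [yv /orP [/eqP ->|yC]]; first exact: connect0.
  exact: merged_bridge_reaches (bridge_comp_in vC) va yC yv.
- by rewrite merged_bridge_loopless.
Qed.

Lemma pole_eq z x : z \in W -> x \in W -> z != x -> z = if x == a then b else a.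
Proof.
rewrite !inE => /orP [/eqP ->|/eqP ->] /orP [/eqP ->|/eqP ->]; rewrite ?eqxx //.
by rewrite [b == a]eq_sym (negPf neq_ab).
Qed.

Lemma bridge_connb_poles f : f \in gE G -> connb (bridge_graph G W f) a b.
Proof.
move=> fG; have [Cf0|Cf] := eqVneq (C f) set0.
  have /andP [f1 f2] := bridge_comp0_gend fG Cf0; have nlf := gend_neq fG.
  apply: connect1; apply/adjbP; exists f; first exact: bridge_self.
  rewrite /= [gend G f]surjective_pairing.
  by move: f1 f2 nlf; rewrite !inE => /orP [] /eqP -> /orP [] /eqP ->; rewrite ?eqxx ?orbT.
have oC := outer_end_comp fG Cf; have /andP [oa ob] := bridge_comp_neq oC.
have [z zW /andP [zb oz]] := bridge_reaches_pole fG bG oC ob.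
have [z' zW' /andP [za oz']] := bridge_reaches_pole fG aG oC oa.
move: oz oz'; rewrite (pole_eq zW _ zb) ?inE ?eqxx ?orbT // (pole_eq zW' _ za) ?inE ?eqxx //.
rewrite eq_sym (negPf neq_ab) => /connb_delv oa' /connb_delv ob'.
by apply: connb_trans ob'; rewrite connb_sym.
Qed.

Lemma in_bridge_part v S :
  (v \in (bridge_part G W S).1) = (v \in W) || [exists f in S, v \in C f].
Proof.
rewrite /= in_setU; congr orb; apply/bigcupP/exists_inP => -[f fS vC]; exists f => //.
Qed.

Section BridgeUnion.
Variable S : {set E}.
Hypotheses (S_sub : S \subset gE G) (S_closed : forall f, f \in S -> F f \subset S).
Local Notation U := (subg G (bridge_part G W S)).

Lemma union_connb_delv_bridge f x y z : f \in S ->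
  connb (delv (bridge_graph G W f) z) x y -> connb (delv U z) x y.
Proof.
move=> fS; apply: connb_sub => // g; rewrite !delvP /= => /and3P [gF -> ->].
by rewrite (subsetP (S_closed fS)).
Qed.

Lemma union_connb_poles_delv f x : f \in S -> x \notin W -> x \notin C f ->
  connb (delv U x) a b.
Proof.
move=> fS xW xC; apply: connb_sub (bridge_connb_poles (subsetP S_sub f fS)) => // g gF.
rewrite delvP /= (subsetP (S_closed fS)) //=.
have gx y : incident G g y -> y != x.
  move=> gy; case/orP: (bridge_incident (subsetP S_sub f fS) gF gy) => [yW|yC].
  - by apply: contraNneq xW => <-.
  - by apply: contraNneq xC => <-.
by rewrite !gx // /incident eqxx ?orbT.
Qed.

Lemma union_connb_pole f y z : f \in S -> z \in W -> y \in C f -> y != z ->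
  connb (delv U z) y (if z == a then b else a).
Proof.
move=> fS zW yC yz; have zG : z \in gV G by move: zW; rewrite !inE => /orP [] /eqP ->.
have [t tW /andP [tz yt]] := bridge_reaches_pole (subsetP S_sub f fS) zG yC yz.
by rewrite -(pole_eq tW zW tz); apply: union_connb_delv_bridge yt.
Qed.

Lemma union_connected e : e \in S -> connected U.
Proof.
move=> eS; apply: (connected_hub (t := a)); first by rewrite in_bridge_part !inE eqxx.
move=> y; rewrite in_bridge_part => /orP [|/exists_inP [f fS yC]].
  rewrite !inE => /orP [] /eqP ->; first exact: connect0.
  rewrite connb_sym; apply: connb_sub (bridge_connb_poles (subsetP S_sub e eS)) => // g.
  exact: (subsetP (S_closed eS)).
have /andP [_ yb] := bridge_comp_neq yC.
have := union_connb_pole fS _ yC yb; rewrite !inE eqxx orbT eq_sym (negPf neq_ab).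
by move=> /(_ isT) /connb_delv.
Qed.

Lemma union_not_cutv_pole v : v \in W -> ~~ cutv U v.
Proof.
move=> vW; apply: (not_cutv_hub (t := if v == a then b else a)) => y.
rewrite in_setD1 in_bridge_part => /andP [yv /orP [yW|/exists_inP [f fS yC]]].
  by rewrite (pole_eq yW vW yv); apply: connect0.
exact: union_connb_pole fS vW yC yv.
Qed.

Lemma union_not_cutv_comp v f0 f1 : f0 \in S -> f1 \in S ->
  v \in C f0 -> v \notin C f1 -> ~~ cutv U v.
Proof.
move=> f0S f1S vC0 vC1; have vW := bridge_comp_notW vC0.
have ba : connb (delv U v) b a by rewrite connb_sym; apply: union_connb_poles_delv f1S vW vC1.
apply: (not_cutv_hub (t := a)) => y.
rewrite in_setD1 in_bridge_part => /andP [yv /orP [|/exists_inP [f fS yC]]].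
  by rewrite !inE => /orP [] /eqP ->; first exact: connect0.
have := union_connb_delv_bridge fS.
have [z zW /andP [zv yz]] := bridge_reaches_pole (subsetP S_sub f fS) (bridge_comp_in vC0) yC yv.
move/(_ _ _ _ yz); move: zW; rewrite !inE => /orP [] /eqP -> // yb.
exact: connb_trans yb ba.
Qed.

Lemma nonsep_bridge_union e1 e2 : e1 \in S -> e2 \in S -> F e1 != F e2 -> nonsep U.
Proof.
move=> e1S e2S Fe12; apply/and3P; split; first exact: union_connected e1S.
- apply/forallP => v; have [vV|vV] := boolP (v \in gV U); last by rewrite /cutv (negPf vV).
  move: vV; rewrite in_bridge_part => /orP [vW|/exists_inP [f0 f0S vC0]].
    exact: union_not_cutv_pole.
  have [vC1|vC1] := boolP (v \in C e1); last exact: union_not_cutv_comp f0S e1S vC0 vC1.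
  have [vC2|vC2] := boolP (v \in C e2); last exact: union_not_cutv_comp f0S e2S vC0 vC2.
  have GS := subsetP S_sub.
  move: Fe12; rewrite (bridge_eq (GS _ e1S) (GS _ f0S) vC1 vC0).
  by rewrite (bridge_eq (GS _ e2S) (GS _ f0S) vC2 vC0) eqxx.
- by apply/orP; left; apply/forallP => f; apply/implyP => /(subsetP S_sub) /gend_neq.
Qed.

End BridgeUnion.

Lemma merge_in_bridge e f x : e \in gE G -> f \in F e -> incident G f x ->
  merge a b x \in a |: C e.
Proof.
move=> eG fF xf; case/orP: (bridge_incident eG fF xf) => [xW|xC].
  by rewrite merge_pole // setU11.
by rewrite merge_id ?(bridge_comp_notW xC) // in_setU1 xC orbT.
Qed.

(* Identifying [b] with [a] turns each bridge into a block through [a]. *)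
Lemma nblocks_idv_bridges (V1 : {set V}) (S : {set E}) : a \in V1 -> S \subset gE G ->
  (forall f, f \in S -> F f \subset S) -> (forall f, f \in S -> C f \subset V1) ->
  nblocks (idv (MGraph V1 S (gend G)) a b) = #|F @: S|.
Proof.
move=> aV1 S_sub S_closed C_sub; have SG f : f \in S -> f \in gE G := subsetP S_sub f.
rewrite (@nblocks_blk _ _ _ a (fun e => (a |: C e, F e)))
  => [|e eS|e eS|e eS|e eS|e f x eS fS] /=.
- apply: eq_card_imset_ker => e f eS fS; rewrite xpair_eqE.
  have [Fef|] := eqVneq (F e) (F f); last by rewrite andbF.
  by rewrite (bridge_comp_inj (SG e eS) (SG f fS) Fef) eqxx.
- apply/and3P; split; [apply/subsetP => z | exact: S_closed |].
    rewrite in_setD1 in_setU1 => /orP [/eqP -> | zC]; first by rewrite neq_ab.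
    by rewrite (subsetP (C_sub e eS)) // andbT; case/andP: (bridge_comp_neq zC).
  apply/forallP => f; apply/implyP => /= fF.
  by rewrite -!/(merge a b _) !(merge_in_bridge (SG e eS) fF) // /incident eqxx ?orbT.
- exact: nonsep_merged_bridge (SG e eS).
- exact: bridge_self (SG e eS).
- exact: setU11.
- move=> xf; rewrite in_setU1 => /orP [/eqP -> | xC]; first by rewrite eqxx.
  move=> xa; rewrite in_bridge (SG f fS) /=.
  by case/orP: xf => /eqP /merge_eq_id /(_ xa) ->; rewrite xC ?orbT.
Qed.

Lemma bridges_nonempty : 0 < #|bridges|.
Proof.
have [z /adjbP [f fG _]] := connect_first_step (nonsep_connb nsG aG bG) neq_ab.
by rewrite card_gt0; apply/set0Pn; exists (F f); apply: imset_f.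
Qed.

Lemma nblocks_idv_bridges_all : nblocks (idv G a b) = #|bridges|.
Proof.
change (nblocks (idv (MGraph (gV G) (gE G) (gend G)) a b) = #|bridges|).
apply: nblocks_idv_bridges => // f _; apply/subsetP => z.
  exact: bridge_sub.
exact: bridge_comp_in.
Qed.

Lemma bridge1_comp0 e : e \in gE G -> F e = [set e] -> nonsep (dele G e) -> C e = set0.
Proof.
move=> eG Fe nse; apply/eqP; apply: contraT => Ce.
have oC := outer_end_comp eG Ce; have /andP [oa _] := bridge_comp_neq oC.
have [z /adjbP [g]] := connect_first_step (nonsep_connb nse (bridge_comp_in oC) aG) oa.
rewrite /= in_setD1 => /andP [ge gG] og.
have : g \in F e by rewrite in_bridge gG; case/orP: og => /eqP ->; rewrite oC ?orbT.
by rewrite Fe inE (negPf ge).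
Qed.

Lemma nblocks_idv_dele_bridge1 e : e \in gE G -> F e = [set e] ->
  nblocks (idv (dele G e) a b) = #|bridges| - 1.
Proof.
move=> eG Fe; have Fe_eq f : f \in gE G -> F f = [set e] -> f = e.
  by move=> fG Ff; have := bridge_self fG; rewrite Ff inE => /eqP.
change (nblocks (idv (MGraph (gV G) (gE G :\ e) (gend G)) a b) = #|bridges| - 1).
rewrite nblocks_idv_bridges //; first last.
- by move=> f _; apply/subsetP => z; apply: bridge_comp_in.
- move=> f; rewrite in_setD1 => /andP [fe fG]; apply/subsetP => g gF.
  rewrite in_setD1 (bridge_sub gF) andbT; apply: contraNneq fe => ge; subst g.
  by have [Ff _] := bridge_mem_eq fG gF; apply/eqP; apply: Fe_eq fG _; rewrite -Ff.
- exact: subD1set.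
rewrite -{2}(setD1K eG) imsetU1 cardsU1 Fe; case: imsetP => [[f]|_]; last by rewrite addKn.
by rewrite in_setD1 => /andP [fe fG] /esym /(Fe_eq f fG) /eqP; rewrite (negPf fe).
Qed.

Lemma bridge_comp_cover v : v \in gV G -> v \notin W -> exists2 f, f \in gE G & v \in C f.
Proof.
move=> vG vW; have /andP [va _] : (v != a) && (v != b) by rewrite !inE negb_or in vW.
have [z /adjbP [f fG vz]] := connect_first_step (nonsep_connb nsG vG aG) va.
exists f; rewrite // incident_bridge_comp // /incident.
by case/orP: vz => /eqP -> /=; rewrite eqxx ?orbT.
Qed.

Section BridgeSets.
Implicit Types (Q : {set {set E}}).
Local Notation SQ := (bridge_edges G W).
Local Notation PQ Q := (bridge_part G W (bridge_edges G W Q)).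

Lemma in_bridge_edges f Q : (f \in SQ Q) = (f \in gE G) && (F f \in Q).
Proof. by rewrite inE. Qed.

Lemma bridge_edges_sub Q : SQ Q \subset gE G.
Proof. by apply/subsetP => f; rewrite in_bridge_edges => /andP []. Qed.

Lemma bridge_edges_closed Q f : f \in SQ Q -> F f \subset SQ Q.
Proof.
rewrite in_bridge_edges => /andP [fG fQ]; apply/subsetP => g gF.
by have [Fg _] := bridge_mem_eq fG gF; rewrite in_bridge_edges (bridge_sub gF) Fg.
Qed.

Lemma bridge_edges_imset Q : Q \subset bridges -> F @: SQ Q = Q.
Proof.
move=> Qb; apply/setP => X; apply/imsetP/idP => [[f] | XQ].
  by rewrite in_bridge_edges => /andP [_ fQ] ->.
have /imsetP [f fG XF] := subsetP Qb X XQ.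
by exists f; rewrite // in_bridge_edges fG -XF.
Qed.

Lemma bridge_edges1 e : e \in gE G -> SQ [set F e] = F e.
Proof.
move=> eG; apply/setP => f; rewrite in_bridge_edges inE.
apply/andP/idP => [[fG /eqP <-] | fF]; first exact: bridge_self.
by have [Ff _] := bridge_mem_eq eG fF; rewrite (bridge_sub fF) Ff.
Qed.

Lemma bridge_part_subg Q : is_subg G (PQ Q).
Proof.
apply/and3P; split; last apply/forallP => f; last apply/implyP => /= fS.
- apply/subsetP => v; rewrite in_bridge_part => /orP [|/exists_inP [f _ /bridge_comp_in]] //.
  by rewrite !inE => /orP [] /eqP ->.
- exact: bridge_edges_sub.
- have fG := subsetP (bridge_edges_sub Q) f fS.
  have endP x : incident G f x -> x \in (PQ Q).1.
    move=> xf; rewrite in_bridge_part.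
    case/orP: (bridge_incident fG (bridge_self fG) xf) => [-> //|xC].
    by apply/orP; right; apply/exists_inP; exists f.
  by rewrite !endP // /incident eqxx ?orbT.
Qed.

Lemma nblocks_idv_bridge_part Q : Q \subset bridges ->
  nblocks (idv (subg G (PQ Q)) a b) = #|Q|.
Proof.
move=> Qb; rewrite -{2}(bridge_edges_imset Qb).
apply: nblocks_idv_bridges => [||f|f fS].
- by rewrite in_bridge_part !inE eqxx.
- exact: bridge_edges_sub.
- exact: bridge_edges_closed.
- apply/subsetP => v vC; rewrite in_bridge_part; apply/orP; right.
  by apply/exists_inP; exists f.
Qed.

Lemma two_bridges Q : Q \subset bridges -> 1 < #|Q| ->
  exists e1 e2, [/\ e1 \in SQ Q, e2 \in SQ Q & F e1 != F e2].
Proof.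
move=> Qb; rewrite -{1}(bridge_edges_imset Qb).
by case/card_gt1P => _ [_ [/imsetP [e1 e1Q ->] /imsetP [e2 e2Q ->] Fe12]]; exists e1, e2.
Qed.

Lemma bridge_edges_card2 Q : Q \subset bridges -> 1 < #|Q| -> 1 < #|SQ Q|.
Proof.
move=> Qb /(two_bridges Qb) [e1 [e2 [e1Q e2Q Fe12]]].
by apply/card_gt1P; exists e1, e2; split => //; apply: contraNneq Fe12 => ->.
Qed.

Lemma nblocks_bridge_part Q : Q \subset bridges -> 1 < #|Q| -> nblocks (subg G (PQ Q)) = 1.
Proof.
move=> Qb /(two_bridges Qb) [e1 [e2 [e1Q e2Q Fe12]]]; apply: nblocks_nonsep.
- by case/and3P: (bridge_part_subg Q).
- exact: (nonsep_bridge_union (bridge_edges_sub Q) (@bridge_edges_closed Q) e1Q e2Q Fe12).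
- by apply/set0Pn; exists e1.
Qed.

Lemma bridge_part_partition Q1 Q2 : Q1 :|: Q2 = bridges -> Q1 :&: Q2 = set0 ->
  [/\ (PQ Q1).1 :&: (PQ Q2).1 = W, (PQ Q1).1 :|: (PQ Q2).1 = gV G,
      (PQ Q1).2 :&: (PQ Q2).2 = set0 & (PQ Q1).2 :|: (PQ Q2).2 = gE G].
Proof.
move=> Q12 Q1Q2; have SQG Q f : f \in SQ Q -> f \in gE G := subsetP (bridge_edges_sub Q) f.
have disj f g : f \in SQ Q1 -> g \in SQ Q2 -> F f != F g.
  rewrite !in_bridge_edges => /andP [_ fQ1] /andP [_ gQ2]; apply: contraTneq isT => Ffg.
  suff : F f \in Q1 :&: Q2 by rewrite Q1Q2 inE.
  by rewrite inE fQ1 Ffg gQ2.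
have inQ f : f \in gE G -> (F f \in Q1) || (F f \in Q2).
  by move=> fG; rewrite -in_setU Q12 imset_f.
split; apply/setP => x.
- rewrite in_setI !in_bridge_part; have [//|xW /=] := boolP (x \in W).
  apply/negP => /andP [/exists_inP [f fS xCf] /exists_inP [g gS xCg]].
  by have := disj f g fS gS; rewrite (bridge_eq (SQG _ _ fS) (SQG _ _ gS) xCf xCg) eqxx.
- rewrite in_setU !in_bridge_part; apply/idP/idP.
    case/orP => /orP [|/exists_inP [f _ /bridge_comp_in]] //;
      by rewrite !inE => /orP [] /eqP ->.
  move=> xG; have [//|xW /=] := boolP (x \in W).
  have [f fG xC] := bridge_comp_cover xG xW.
  case/orP: (inQ f fG) => fQ; apply/orP; [left|right];
    by apply/exists_inP; exists f; rewrite ?in_bridge_edges ?fG.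
- by rewrite in_setI in_set0; apply/negP => /andP [f1 f2]; have := disj x x f1 f2; rewrite eqxx.
- by rewrite in_setU !in_bridge_edges -andb_orr; have [/inQ|] := boolP (x \in gE G).
Qed.

Lemma bridge1_or_card2 e : e \in gE G -> F e = [set e] \/ 1 < #|SQ [set F e]|.
Proof.
move=> eG; rewrite bridge_edges1 //; case: ltnP => [|Fe1]; [by right | left].
by apply/eqP; rewrite eq_sym eqEcard sub1set bridge_self // cards1 Fe1.
Qed.

End BridgeSets.

End Bridges.

Section Phi.
Variables (V E : finType) (G : mgraph V E) (u1 u2 : V).
Hypotheses (wfG : wfb G) (phiG : inPhi G).
Hypotheses (u1G : u1 \in gV G) (u2G : u2 \in gV G) (u12 : u1 != u2).
Local Notation W := [set u1; u2].
Local Notation F := (bridge G [set u1; u2]).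
Local Notation bridges := (F @: gE G).
Local Notation part Q := (subg G (bridge_part G W (bridge_edges G W Q))).

Lemma phi_nonsep : nonsep G.
Proof. by case/and5P: phiG. Qed.

Lemma phi_bridges_odd e : e \in gE G -> F e = [set e] -> odd #|bridges|.
Proof.
move=> eG Fe; have nsG := phi_nonsep.
case/and5P: phiG => _ _ /forall_inP nsG_e /forall_inP evenG_e _.
have ends := bridge_comp0_gend wfG eG (bridge1_comp0 wfG u1G eG Fe (nsG_e e eG)).
have nle := gend_neq nsG u12 u1G u2G eG.
suff : ~~ odd (#|bridges| - 1).
  by case: #|_| (bridges_nonempty nsG u12 u1G u2G) => // n _; rewrite subSS subn0.
have := evenG_e e eG; rewrite /contr /is_loop (negPf nle).
move: ends nle; rewrite !inE; case/andP => /orP [] /eqP -> /orP [] /eqP ->; rewrite ?eqxx // => _.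
  by rewrite (nblocks_idv_dele_bridge1 wfG nsG u12 u1G u2G eG Fe).
have u21 : u2 != u1 by rewrite eq_sym.
have W21 : [set u2; u1] = W by rewrite setUC.
by rewrite (nblocks_idv_dele_bridge1 wfG nsG u21 u2G u1G eG) W21.
Qed.

Lemma phi_split_parity Q1 Q2 : Q1 :|: Q2 = bridges -> Q1 :&: Q2 = set0 ->
    1 < #|bridge_edges G W Q1| -> 1 < #|bridge_edges G W Q2| ->
  (odd #|Q1| == ~~ odd (nblocks (part Q1))) &&
  (~~ odd (nblocks (part Q1)) == odd (nblocks (part Q2))).
Proof.
move=> Q12 Q1Q2 E1 E2; have nsG := phi_nonsep.
have Q1b : Q1 \subset bridges by rewrite -Q12 subsetUl.
rewrite -(nblocks_idv_bridge_part wfG nsG u12 u1G u2G Q1b).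
have [V12 V12E E12 E12E] := bridge_part_partition wfG nsG u1G u2G Q12 Q1Q2.
case/and5P: phiG => _ _ _ _ /forallP /(_ (bridge_part G W (bridge_edges G W Q1))).
move=> /forallP /(_ (bridge_part G W (bridge_edges G W Q2))) /forallP /(_ u1) /forallP /(_ u2).
by move/implyP; apply; rewrite !bridge_part_subg // E1 E2 u12 V12 V12E E12 E12E !eqxx.
Qed.

Lemma phi_bridges_neq2 : #|bridges| != 2.
Proof.
apply/negP => /cards2P [X [Y [XY bXY]]].
have [XG YG] : X \in bridges /\ Y \in bridges by rewrite bXY !inE !eqxx ?orbT.
case/imsetP: XG => e eG ->{X} in XY bXY *; case/imsetP: YG => f fG ->{Y} in XY bXY *.
have big g : g \in gE G -> 1 < #|bridge_edges G W [set F g]|.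
  move=> gG; case: (bridge1_or_card2 u1 u2 wfG gG) => // /(phi_bridges_odd gG).
  by rewrite bXY cards2 XY.
have disj (S T : {set E}) : S != T -> [set S] :&: [set T] = set0.
  by move=> ST; apply/setP => Z; rewrite !inE; case: eqP => // ->; rewrite (negPf ST).
have YX : F f != F e by rewrite eq_sym.
have /andP [/eqP ef1 /eqP ef2] := phi_split_parity (esym bXY) (disj _ _ XY) (big _ eG) (big _ fG).
have /andP [/eqP fe1 _] :=
  phi_split_parity (etrans (setUC _ _) (esym bXY)) (disj _ _ YX) (big _ fG) (big _ eG).
by move: ef1 ef2 fe1; rewrite !cards1 /= => <- <-.
Qed.

Lemma phi_bridges_lt4 : #|bridges| < 4.
Proof.
rewrite ltnNge; apply/negP => k4; have nsG := phi_nonsep.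
have /card_gt1P [X [Y [XB YB XY]]] : 1 < #|bridges| by apply: leq_trans k4.
pose Q1 := [set X; Y]; pose Q2 := bridges :\: Q1.
have Q1b : Q1 \subset bridges by rewrite subUset !sub1set XB YB.
have Q2b : Q2 \subset bridges by apply: subsetDl.
have cQ1 : 1 < #|Q1| by rewrite cards2 XY.
have cQ2 : 1 < #|Q2| by rewrite cardsD (setIidPr Q1b) cards2 XY ltn_subRL.
have Q12 : Q1 :|: Q2 = bridges by rewrite -[RHS](setID _ Q1) (setIidPr Q1b).
have Q1Q2 : Q1 :&: Q2 = set0.
  by apply/setP => Z; rewrite in_setI in_setD in_set0; case: (Z \in Q1).
have := phi_split_parity Q12 Q1Q2 (bridge_edges_card2 Q1b cQ1) (bridge_edges_card2 Q2b cQ2).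
by rewrite !(nblocks_bridge_part wfG nsG u12 u1G u2G) // andbF.
Qed.

End Phi.

Theorem lemma4p3 (V E : finType) (G : mgraph V E) :
  wfb G -> inPhi G ->
  forall u1 u2 : V, u1 \in gV G -> u2 \in gV G -> u1 != u2 ->
  nblocks (idv G u1 u2) \in [:: 1; 3].
Proof.
move=> wfG phiG u1 u2 u1G u2G u12; have nsG := phi_nonsep phiG.
rewrite (nblocks_idv_bridges_all wfG nsG u12 u1G u2G).
have := bridges_nonempty nsG u12 u1G u2G.
have := phi_bridges_neq2 wfG phiG u1G u2G u12.
have := phi_bridges_lt4 wfG phiG u1G u2G u12.
by case: #|_| => [|[|[|[|[]]]]].
Qed.
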